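(* Let $Y$ be a topological space and let $f\colon[0,1]\to Y$ be a function whose graph $\{(x,f(x))\colon x\in[0,1]\}$, with the subspace topology inherited from the product $[0,1]\times Y$, is connected and locally connected. Then $f$ is continuous.
   Context: $[0,1]$ carries its usual Euclidean topology. *)

From HB Require Import structures.
From mathcomp Require Import all_boot all_order all_algebra.
From mathcomp Require Import all_classical all_reals all_analysis.
Set Implicit Arguments. Unset Strict Implicit. Unset Printing Implicit Defensive.
Import Order.TTheory GRing.Theory Num.Theory.
Import numFieldNormedType.Exports.
Local Open Scope classical_set_scope.
Local Open Scope ring_scope.

(* A subset A of a topological space T is locally connected (for its subspace
   topology) when every point x of A has a neighbourhood basis, in the subspace
   topology of A, of connected open sets: for every neighbourhood U of x in T
   there is an open set V of T containing x with A `&` V contained in U and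
   A `&` V connected.  (Open sets of the subspace A are exactly the A `&` V
   with V open in T, and MathComp's [connected] of a set is connectedness
   for the subspace topology.) *)
Definition locally_connected_set {T : topologicalType} (A : set T) : Prop :=
  forall x, A x -> forall U, nbhs x U ->
    exists V : set T, [/\ open V, V x, A `&` V `<=` U & connected (A `&` V)].

Definition graph01 {R : realType} {Y : Type} (f : R -> Y) : set (R * Y) :=
  [set p | exists2 x, x \in `[0, 1]%R & p = (x, f x)].

From HB Require Import structures.
From mathcomp Require Import all_boot all_order all_algebra.
From mathcomp Require Import all_classical all_reals all_analysis.
From mathcomp Require Import lra.
Import numFieldNormedType.Exports.
Import Order.TTheory GRing.Theory Num.Theory.
Local Open Scope classical_set_scope.
Local Open Scope ring_scope.

(* Fix x0 in [0, 1] and a neighbourhood W of f x0.  Local connectedness gives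
   an open V around (x0, f x0) such that G `&` V is connected and lies over W.
   The projection of G `&` V to [0, 1] is then an interval containing x0, and
   connectedness of G forces it to reach strictly beyond x0 on each side where
   [0, 1] does: otherwise the part of G beyond x0 would be clopen in G.  So the
   projection is a neighbourhood of x0 in [0, 1], on which f maps into W. *)

Lemma connected_open_gt {R : realType} {T : topologicalType} {g : T -> R}
    {S V : set T} {p q : T} :
  continuous g -> connected S -> open V -> (S `&` V) p -> S q -> g p < g q ->
  (forall r, S r -> g r = g p -> r = p) ->
  exists2 r, (S `&` V) r & g p < g r.
Proof.
move=> g_cont cS oV [Sp Vp] Sq gpq g_inj; apply: contrapT => noV.
pose S_gt := S `&` [set r | g p < g r].
suff S_gtE : S_gt = S.
  have : S_gt p by rewrite S_gtE.
  by case=> _ /=; rewrite ltxx.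
apply: cS; first by exists q.
- exists (g @^-1` [set t | g p < t]) => //.
  by apply: open_comp; [move=> *; exact: g_cont | exact: open_gt].
- exists (g @^-1` [set t | g p <= t] `&` ~` V).
    apply: closedI; last exact: open_closedC.
    by apply: preimage_closed => //; exact: closed_ge.
  (* p is the only point of S at level g p, and it lies in V. *)
  apply/seteqP; split=> r [Sr gr] /=.
    by split=> //; split; [exact: ltW | move=> Vr; apply: noV; exists r].
  case: gr => gpr nVr; split=> //=; rewrite lt_neqAle gpr andbT.
  by apply/eqP => /esym/(g_inj _ Sr) rp; apply: nVr; rewrite rp.
Qed.

Lemma is_interval_fst {R : realType} {Y : topologicalType} {S : set (R * Y)} :
  connected S -> is_interval (fst @` S).
Proof.
move=> cS; apply/connected_intervalP/connected_continuous_connected => //.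
by apply: continuous_subspaceT => r; exact: cvg_fst.
Qed.

Section graph01.
Context {R : realType} {Y : topologicalType} {f : R -> Y}.
Local Notation G := (graph01 f).

Lemma graph01_mem {x} : x \in `[0, 1]%R -> G (x, f x).
Proof. by exists x. Qed.

Lemma graph01_fst_inj r s : G r -> G s -> r.1 = s.1 -> r = s.
Proof. by case=> x _ -> [y _ ->] /= ->. Qed.

Section open_nbhs.
Context {V : set (R * Y)} {x0 : R}.
Hypotheses (cG : connected G) (oV : open V) (cGV : connected (G `&` V)).
Hypotheses (Vx0 : V (x0, f x0)) (x0_01 : x0 \in `[0, 1]%R).

Let GVx0 : (G `&` V) (x0, f x0).
Proof. by split => //; exact: graph01_mem. Qed.

Let fst_GVx0 : (fst @` (G `&` V)) x0.
Proof. by exists (x0, f x0). Qed.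

Let graph01_level_x0 r : G r -> r.1 = x0 -> r = (x0, f x0).
Proof. by move=> Gr; apply: graph01_fst_inj Gr (graph01_mem x0_01). Qed.

Lemma graph01_open_left :
  exists2 a, a < x0 & forall x, 0 <= x -> a < x -> x <= x0 ->
    (fst @` (G `&` V)) x.
Proof.
have [x0_gt0|x0_le0] := ltP 0 x0; last first.
  by exists (x0 - 1) => [|x x_ge0 _ x_le]; [lra | have -> : x = x0 by lra].
have negfst_cont : continuous (fun r : R * Y => - r.1).
  by move=> r; apply: continuousN; exact: cvg_fst.
have [r GVr r_lt] : exists2 r, (G `&` V) r & - x0 < - r.1.
  have G0 : G (0, f 0) by apply: graph01_mem; rewrite in_itv /= lexx ler01.
  apply: (connected_open_gt negfst_cont cG oV GVx0 G0).
  - by rewrite /= ltrN2.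
  - by move=> r Gr /= /oppr_inj; exact: graph01_level_x0 _ Gr.
exists r.1 => [|x _ r_x x_le]; first by rewrite -ltrN2.
apply: (is_interval_fst cGV _ _ (imageP fst GVr) fst_GVx0).
by rewrite (ltW r_x).
Qed.

Lemma graph01_open_right :
  exists2 b, x0 < b & forall x, x0 <= x -> x < b -> x <= 1 ->
    (fst @` (G `&` V)) x.
Proof.
have [x0_lt1|x0_ge1] := ltP x0 1; last first.
  by exists (x0 + 1) => [|x x_ge _ x_le1]; [lra | have -> : x = x0 by lra].
have fst_cont : continuous (@fst R Y) by move=> r; exact: cvg_fst.
have [r GVr r_gt] : exists2 r, (G `&` V) r & x0 < r.1.
  have G1 : G (1, f 1) by apply: graph01_mem; rewrite in_itv /= lexx ler01.
  exact: (connected_open_gt fst_cont cG oV GVx0 G1 x0_lt1 graph01_level_x0).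
exists r.1 => // x x_ge x_r _.
apply: (is_interval_fst cGV _ _ fst_GVx0 (imageP fst GVr)).
by rewrite x_ge (ltW x_r).
Qed.

Lemma graph01_fst_nbhs_within :
  within `[0, 1]%classic (nbhs x0) (fst @` (G `&` V)).
Proof.
have [a a_lt I_left] := graph01_open_left.
have [b b_gt I_right] := graph01_open_right.
have x0_ab : x0 \in `]a, b[ by rewrite in_itv /= a_lt b_gt.
apply: filterS (near_in_itvoo x0_ab) => x + x_01.
move: x_01; rewrite /= !in_itv /= => /andP[x_ge0 x_le1] /andP[a_x x_b].
have [x_le|x_ge] := leP x x0; first exact: I_left.
by apply: I_right => //; exact: ltW.
Qed.

End open_nbhs.
End graph01.

Theorem mainTheorem4 (R : realType) (Y : topologicalType) (f : R -> Y) :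
  connected (graph01 f) -> locally_connected_set (graph01 f) ->
  {within `[0, 1]%classic, continuous f}.
Proof.
move=> cG lcG; apply/subspace_continuousP => x0 x0_01 W W_fx0.
have nbhs_W : nbhs (x0, f x0) (setT `*` W).
  by exists (setT, W) => //=; split => //; exact: filterT.
have [V [oV Vx0 GV_W cGV]] := lcG _ (graph01_mem x0_01) _ nbhs_W.
apply: filterS (graph01_fst_nbhs_within cG oV cGV Vx0 x0_01).
move=> _ [_ [[x x_01 ->] Vx] <-] /=.
by have [] := GV_W (x, f x) (conj (graph01_mem x_01) Vx).
Qed.
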